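(* There is a universal constant $C>0$ such that for all $d,k\ge1$ and all $\alpha\in(0,1]$, $\mathrm{fat}_\alpha(\mathcal{H}_{k,d})\le\frac{Ck^2}{\alpha^2}\log^3\!\big(\frac{ek}{\alpha}\big)$.
   Context: $\mathcal{X}=\{x\in[-1,1]^d:\|x\|_2\le1\}$, $\mathrm{clip}(z)=\max\{-1,\min\{1,z\}\}$, $\mathcal{H}_{k,d}=\{x\mapsto\mathrm{clip}(\sum_{j=1}^ka_j\max\{0,w^j\cdot x\}): a_j\in[-1,1],\|w^j\|_2\le1\}$. Sequential fat-shattering dimension: for $\mathcal{F}\subseteq\mathbb{R}^{\mathcal X}$ and $\alpha>0$, complete binary trees $(x_u)_{u\in\{0,1\}^{<m}}\subseteq\mathcal X$ and $(s_u)_{u\in\{0,1\}^{<m}}\subseteq\mathbb R$ are $\alpha$-shattered by $\mathcal F$ if for every $b\in\{0,1\}^m$ there is $f_b\in\mathcal F$ with, for all $t<m$, $f_b(x_{b_{\le t}})\ge s_{b_{\le t}}+\alpha$ if $b_{t+1}=1$ and $f_b(x_{b_{\le t}})\le s_{b_{\le t}}-\alpha$ if $b_{t+1}=0$; $\mathrm{fat}_\alpha(\mathcal F)$ is the supremum of such $m$ (0 if none, $\infty$ if unbounded). *)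

From Stdlib Require Import Reals List.
Open Scope R_scope.

(* Vectors of R^d are represented as functions nat -> R; only the
   coordinates 0..d-1 are ever used. *)
Definition vec := nat -> R.

Fixpoint fsum (n : nat) (g : nat -> R) : R :=
  match n with
  | O => 0
  | S n' => fsum n' g + g n'
  end.

Definition dot (d : nat) (w x : vec) : R := fsum d (fun j => w j * x j).
Definition norm2 (d : nat) (x : vec) : R := sqrt (fsum d (fun j => x j ^ 2)).

Definition inX (d : nat) (x : vec) : Prop :=
  (forall j, (j < d)%nat -> -1 <= x j <= 1) /\ norm2 d x <= 1.

Definition clip (z : R) : R := Rmax (-1) (Rmin 1 z).

Definition inH (k d : nat) (f : vec -> R) : Prop :=
  exists (a : nat -> R) (w : nat -> vec),
    (forall j, (j < k)%nat -> -1 <= a j <= 1 /\ norm2 d (w j) <= 1) /\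
    forall x, f x = clip (fsum k (fun j => a j * Rmax 0 (dot d (w j) x))).

(* Complete binary trees of depth m: nodes are indexed by bit-strings
   u in {0,1}^{<m} (lists of booleans of length < m).
   (xt, st) is alpha-shattered by F (of depth m). *)
Definition seq_shattered (d : nat) (F : (vec -> R) -> Prop) (alpha : R)
    (m : nat) (xt : list bool -> vec) (st : list bool -> R) : Prop :=
  (forall u : list bool, (length u < m)%nat -> inX d (xt u)) /\
  forall b : list bool, length b = m ->
    exists f, F f /\
      forall t, (t < m)%nat ->
        let u := firstn t b in
        if nth t b false then f (xt u) >= st u + alpha
        else f (xt u) <= st u - alpha.

(* fat_alpha(F) <= B  iff every depth m admitting an alpha-shattered
   tree satisfies m <= B (fat is the supremum of such m). *)
Definition fat_le (d : nat) (F : (vec -> R) -> Prop) (alpha B : R) : Prop :=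
  forall (m : nat) xt st, seq_shattered d F alpha m xt st -> INR m <= B.

(* If a depth-[m] tree is [alpha]-shattered by [H_{k,d}], then along every path the shattering
   network beats the thresholds by [alpha] at every node.  The thresholds average out over a
   random path, so [m alpha] is at most the sequential Rademacher complexity of the unclipped
   networks, hence at most [k] times that of [{+-ReLU(w.x)}].  The latter is bounded by Dudley
   chaining with Massart's lemma, using sequential [2^-j]-covers of log-size [O(4^j log m)]
   given by an online learner that makes at most [4^(j+1)] updates on any path.  This yields
   [m alpha = O(k log m sqrt(m log m))], i.e. [m = O((k/alpha)^2 log^3 m)], which inverts to the
   claimed bound. *)

From Stdlib Require Import Reals Lra Psatz List Lia ZArith.
From Stdlib Require Import ClassicalEpsilon.
Import ListNotations.
Open Scope R_scope.

Lemma fsum_ext n f g : (forall j, (j < n)%nat -> f j = g j) -> fsum n f = fsum n g.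
Proof.
  induction n; simpl; intros H; auto.
  rewrite IHn, H by (try intros; try apply H; lia); auto.
Qed.

Lemma fsum_plus n f g : fsum n (fun j => f j + g j) = fsum n f + fsum n g.
Proof. induction n; simpl; [lra | rewrite IHn; lra]. Qed.

Lemma fsum_minus n f g : fsum n (fun j => f j - g j) = fsum n f - fsum n g.
Proof. induction n; simpl; [lra | rewrite IHn; lra]. Qed.

Lemma fsum_scal n c f : fsum n (fun j => c * f j) = c * fsum n f.
Proof. induction n; simpl; [lra | rewrite IHn; lra]. Qed.

Lemma fsum_le n f g : (forall j, (j < n)%nat -> f j <= g j) -> fsum n f <= fsum n g.
Proof.
  induction n; simpl; intros H; [lra |].
  assert (fsum n f <= fsum n g) by (apply IHn; intros; apply H; lia).
  specialize (H n ltac:(lia)); lra.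
Qed.

Lemma fsum_const n c : fsum n (fun _ => c) = INR n * c.
Proof. induction n; simpl fsum; [simpl; lra |]. rewrite IHn, S_INR; lra. Qed.

Lemma fsum_nonneg n f : (forall j, (j < n)%nat -> 0 <= f j) -> 0 <= fsum n f.
Proof. intros H. rewrite <- (Rmult_0_r (INR n)), <- fsum_const. apply fsum_le; auto. Qed.

Lemma fsum_shift n g : fsum (S n) g = g O + fsum n (fun t => g (S t)).
Proof. induction n; simpl; [lra |]. simpl in IHn. rewrite IHn; lra. Qed.

Lemma fsum_swap n k (f : nat -> nat -> R) :
  fsum n (fun t => fsum k (fun j => f t j)) = fsum k (fun j => fsum n (fun t => f t j)).
Proof.
  induction n; simpl.
  - induction k; simpl; [lra | rewrite <- IHk; lra].
  - rewrite IHn, <- fsum_plus; auto.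
Qed.

Lemma fsum_telescope n (a : nat -> R) : fsum n (fun i => a (S i) - a i) = a n - a O.
Proof. induction n; simpl; [lra | rewrite IHn; lra]. Qed.

Lemma exp_le_exp x y : x <= y -> exp x <= exp y.
Proof. intros [H | ->]; [left; apply exp_increasing; auto | lra]. Qed.

Lemma exp_le_inv x y : exp x <= exp y -> x <= y.
Proof. intros [H | H]; [left; apply exp_lt_inv | right; apply exp_inv]; auto. Qed.

Lemma ln_le x y : 0 < x -> x <= y -> ln x <= ln y.
Proof. intros H [H1 | <-]; [left; apply ln_increasing | lra]; auto. Qed.

Lemma ln_nonneg x : 1 <= x -> 0 <= ln x.
Proof. intros; rewrite <- ln_1; apply ln_le; lra. Qed.

Lemma ln_le_minus_1 x : 0 < x -> ln x <= x - 1.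
Proof.
  intros H. apply exp_le_inv. rewrite exp_ln by auto.
  pose proof (exp_ineq1_le (x - 1)); lra.
Qed.

Lemma Rabs_le_inv a b : Rabs a <= b -> - b <= a <= b.
Proof. unfold Rabs; destruct Rcase_abs; intros; lra. Qed.

Definition sqnorm (d : nat) (x : vec) : R := fsum d (fun j => x j ^ 2).

Lemma sqnorm_nonneg d x : 0 <= sqnorm d x.
Proof. apply fsum_nonneg; intros; apply pow2_ge_0. Qed.

Lemma sqnorm_le_1 d x : norm2 d x <= 1 -> sqnorm d x <= 1.
Proof.
  intros H. pose proof (sqnorm_nonneg d x).
  destruct (Rle_dec (sqnorm d x) 1) as [| Hgt]; auto.
  assert (1 < sqrt (sqnorm d x)) by (rewrite <- sqrt_1; apply sqrt_lt_1; lra).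
  unfold norm2 in H; unfold sqnorm in *; lra.
Qed.

(* Weak Cauchy-Schwarz: [2 |w.x| <= |w|^2 + |x|^2], termwise from [(w_j -+ x_j)^2 >= 0]. *)
Lemma Rabs_dot_le_1 d w x : sqnorm d w <= 1 -> sqnorm d x <= 1 -> Rabs (dot d w x) <= 1.
Proof.
  unfold sqnorm, dot; intros Hw Hx.
  assert (Hsum : forall s, s = 1 \/ s = -1 ->
    s * fsum d (fun j => w j * x j) <=
      / 2 * (fsum d (fun j => w j ^ 2) + fsum d (fun j => x j ^ 2))).
  { intros s Hs. rewrite <- fsum_plus, <- !fsum_scal. apply fsum_le; intros j _.
    pose proof (pow2_ge_0 (w j - x j)); pose proof (pow2_ge_0 (w j + x j)).
    destruct Hs as [-> | ->]; nra. }
  pose proof (Hsum 1 (or_introl eq_refl)); pose proof (Hsum (-1) (or_intror eq_refl)).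
  apply Rabs_le; lra.
Qed.

Lemma Rabs_relu_le_1 d w x : sqnorm d w <= 1 -> sqnorm d x <= 1 -> Rabs (Rmax 0 (dot d w x)) <= 1.
Proof.
  intros Hw Hx. pose proof (Rabs_le_inv _ _ (Rabs_dot_le_1 d w x Hw Hx)).
  apply Rabs_le; unfold Rmax; destruct Rle_dec; lra.
Qed.

(* [path_sum m v b] is [sum_{t<m} eps_t v(b_{<t})] with [eps_t = +-1] read off the path [b];
   [tree_avg m F] is the average of [F] over the [2^m] paths of length [m]. *)
Definition bsign (c : bool) : R := if c then 1 else -1.

Definition path_sum (m : nat) (v : list bool -> R) (b : list bool) : R :=
  fsum m (fun t => bsign (nth t b false) * v (firstn t b)).

Fixpoint tree_avg (m : nat) (F : list bool -> R) : R :=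
  match m with
  | O => F nil
  | S m' => (tree_avg m' (fun b => F (true :: b)) + tree_avg m' (fun b => F (false :: b))) / 2
  end.

Lemma tree_avg_le m F G : (forall b, length b = m -> F b <= G b) -> tree_avg m F <= tree_avg m G.
Proof.
  revert F G; induction m; intros F G H; simpl; [apply H; auto |].
  assert (tree_avg m (fun b => F (true :: b)) <= tree_avg m (fun b => G (true :: b)))
    by (apply IHm; intros; apply H; simpl; auto).
  assert (tree_avg m (fun b => F (false :: b)) <= tree_avg m (fun b => G (false :: b)))
    by (apply IHm; intros; apply H; simpl; auto).
  lra.
Qed.

Lemma tree_avg_ext m F G : (forall b, length b = m -> F b = G b) -> tree_avg m F = tree_avg m G.
Proof. intros H; apply Rle_antisym; apply tree_avg_le; intros; rewrite H; auto; lra. Qed.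

Lemma tree_avg_plus m F G : tree_avg m (fun b => F b + G b) = tree_avg m F + tree_avg m G.
Proof. revert F G; induction m; intros; simpl; auto. rewrite !IHm; lra. Qed.

Lemma tree_avg_scal m c F : tree_avg m (fun b => c * F b) = c * tree_avg m F.
Proof. revert F; induction m; intros; simpl; auto. rewrite !IHm; lra. Qed.

Lemma tree_avg_const m c : tree_avg m (fun _ => c) = c.
Proof. induction m; simpl; auto. rewrite IHm; lra. Qed.

Lemma tree_avg_fsum m k (F : nat -> list bool -> R) :
  tree_avg m (fun b => fsum k (fun j => F j b)) = fsum k (fun j => tree_avg m (F j)).
Proof. induction k; simpl; [apply tree_avg_const | rewrite tree_avg_plus, IHk; auto]. Qed.

Lemma path_sum_cons m v c b :
  path_sum (S m) v (c :: b) = bsign c * v nil + path_sum m (fun u => v (c :: u)) b.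
Proof. unfold path_sum; rewrite fsum_shift; auto. Qed.

Lemma path_sum_minus m f g b : path_sum m (fun u => f u - g u) b = path_sum m f b - path_sum m g b.
Proof. unfold path_sum; rewrite <- fsum_minus; apply fsum_ext; intros; ring. Qed.

Lemma path_sum_le m f b B :
  (forall t, (t < m)%nat -> Rabs (f (firstn t b)) <= B) -> path_sum m f b <= INR m * B.
Proof.
  intros H. unfold path_sum. rewrite <- fsum_const. apply fsum_le; intros t Ht.
  eapply Rle_trans; [apply Rle_abs |].
  rewrite Rabs_mult. replace (Rabs (bsign (nth t b false))) with 1
    by (destruct (nth t b false); simpl; unfold Rabs; destruct Rcase_abs; lra).
  rewrite Rmult_1_l; auto.
Qed.

(* A fixed tree [s] is a martingale difference sequence along a random path. *)
Lemma tree_avg_path_sum_0 m s : tree_avg m (path_sum m s) = 0.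
Proof.
  revert s; induction m; intros s; simpl; [unfold path_sum; simpl; auto |].
  rewrite (tree_avg_ext m (fun b => path_sum (S m) s (true :: b))
             (fun b => bsign true * s nil + path_sum m (fun u => s (true :: u)) b))
    by (intros; apply path_sum_cons).
  rewrite (tree_avg_ext m (fun b => path_sum (S m) s (false :: b))
             (fun b => bsign false * s nil + path_sum m (fun u => s (false :: u)) b))
    by (intros; apply path_sum_cons).
  rewrite !tree_avg_plus, !tree_avg_const, !IHm; simpl; lra.
Qed.

Lemma cosh_le_exp_sq x : (exp x + exp (- x)) / 2 <= exp (2 * x ^ 2).
Proof.
  destruct (Rle_dec (x ^ 2) (1 / 2)) as [Hx2 | Hx2].
  - (* for [x^2 <= 1/2]: [e^x <= 1/(1-x)], [e^-x <= 1/(1+x)], and [1/(1-x^2) <= 1 + 2x^2] *)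
    assert (Hx : -1 < x < 1) by nra.
    assert (A : exp x <= / (1 - x)).
    { pose proof (exp_ineq1_le (- x)) as H. rewrite exp_Ropp in H.
      pose proof (exp_pos x).
      apply (Rmult_le_reg_r (1 - x)); [lra |]. rewrite Rinv_l by lra.
      apply (Rmult_le_reg_r (/ exp x)); [apply Rinv_0_lt_compat; lra |].
      replace (exp x * (1 - x) * / exp x) with (1 - x) by (field; lra). lra. }
    assert (B : exp (- x) <= / (1 + x)).
    { pose proof (exp_ineq1_le x). rewrite exp_Ropp. apply Rinv_le_contravar; lra. }
    pose proof (exp_ineq1_le (2 * x ^ 2)).
    assert (/ (1 - x) + / (1 + x) = 2 / (1 - x ^ 2)) by (field; lra).
    assert (2 / (1 - x ^ 2) <= 2 * (1 + 2 * x ^ 2)).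
    { apply (Rmult_le_reg_r (1 - x ^ 2)); [nra |].
      unfold Rdiv; rewrite Rmult_assoc, Rinv_l by nra. nra. }
    lra.
  - assert (exp x <= exp (2 * x ^ 2)) by (apply exp_le_exp; nra).
    assert (exp (- x) <= exp (2 * x ^ 2)) by (apply exp_le_exp; nra).
    lra.
Qed.

(* Azuma-Hoeffding for a tree bounded by [c]. *)
Lemma tree_avg_exp_path_sum_le m c lam v : (forall u, Rabs (v u) <= c) ->
  tree_avg m (fun b => exp (lam * path_sum m v b)) <= exp (2 * lam ^ 2 * c ^ 2 * INR m).
Proof.
  revert v; induction m; intros v Hv.
  - unfold path_sum; simpl. rewrite !Rmult_0_r, exp_0; lra.
  - simpl tree_avg.
    rewrite (tree_avg_ext m (fun b => exp (lam * path_sum (S m) v (true :: b)))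
               (fun b => exp (lam * v nil) * exp (lam * path_sum m (fun u => v (true :: u)) b)))
      by (intros; rewrite path_sum_cons, <- exp_plus; simpl; f_equal; ring).
    rewrite (tree_avg_ext m (fun b => exp (lam * path_sum (S m) v (false :: b)))
               (fun b => exp (- (lam * v nil)) * exp (lam * path_sum m (fun u => v (false :: u)) b)))
      by (intros; rewrite path_sum_cons, <- exp_plus; simpl; f_equal; ring).
    rewrite !tree_avg_scal.
    pose proof (IHm (fun u => v (true :: u)) ltac:(intros; apply Hv)) as Htrue.
    pose proof (IHm (fun u => v (false :: u)) ltac:(intros; apply Hv)) as Hfalse.
    set (E := exp (2 * lam ^ 2 * c ^ 2 * INR m)) in *.
    assert (Hroot : exp (2 * (lam * v nil) ^ 2) <= exp (2 * lam ^ 2 * c ^ 2)).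
    { apply exp_le_exp. specialize (Hv nil).
      assert (v nil ^ 2 <= c ^ 2)
        by (rewrite <- (pow2_abs (v nil)); apply pow_incr; split; auto; apply Rabs_pos).
      pose proof (pow2_ge_0 lam). nra. }
    replace (exp (2 * lam ^ 2 * c ^ 2 * INR (S m))) with (exp (2 * lam ^ 2 * c ^ 2) * E)
      by (unfold E; rewrite <- exp_plus, S_INR; f_equal; ring).
    pose proof (cosh_le_exp_sq (lam * v nil)).
    pose proof (exp_pos (lam * v nil)); pose proof (exp_pos (- (lam * v nil))).
    assert (0 < E) by apply exp_pos.
    apply Rle_trans with ((exp (lam * v nil) + exp (- (lam * v nil))) / 2 * E); [| nra].
    apply Rmult_le_compat_l with (r := exp (lam * v nil)) in Htrue; [| lra].
    apply Rmult_le_compat_l with (r := exp (- (lam * v nil))) in Hfalse; [| lra].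
    lra.
Qed.

Lemma exp_tree_avg_le m F : exp (tree_avg m F) <= tree_avg m (fun b => exp (F b)).
Proof.
  revert F; induction m; intros F; simpl; [lra |].
  pose proof (IHm (fun b => F (true :: b))); pose proof (IHm (fun b => F (false :: b))).
  set (a := tree_avg m (fun b => F (true :: b))) in *.
  set (c := tree_avg m (fun b => F (false :: b))) in *.
  assert (exp ((a + c) / 2) <= (exp a + exp c) / 2).
  { replace a with (a / 2 + a / 2) at 2 by field. replace c with (c / 2 + c / 2) at 2 by field.
    replace ((a + c) / 2) with (a / 2 + c / 2) by field. rewrite !exp_plus.
    pose proof (pow2_ge_0 (exp (a / 2) - exp (c / 2))). nra. }
  lra.
Qed.

Section ListSum.
Context {X : Type}.

Definition sumL (f : X -> R) (V : list X) : R := fold_right (fun v acc => f v + acc) 0 V.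

Lemma sumL_nonneg f V : (forall v, In v V -> 0 <= f v) -> 0 <= sumL f V.
Proof.
  induction V as [| a V IH]; simpl; intros H; [lra |].
  pose proof (H a (or_introl eq_refl)); pose proof (IH (fun v h => H v (or_intror h))). lra.
Qed.

Lemma sumL_ge_term f V v : (forall v, In v V -> 0 <= f v) -> In v V -> f v <= sumL f V.
Proof.
  induction V as [| a V IH]; simpl; intros H Hin; [destruct Hin |].
  pose proof (sumL_nonneg f V (fun v h => H v (or_intror h))).
  destruct Hin as [<- | Hin]; [lra |].
  pose proof (H a (or_introl eq_refl)); pose proof (IH (fun v h => H v (or_intror h)) Hin). lra.
Qed.

Lemma sumL_le f V B : (forall v, In v V -> f v <= B) -> sumL f V <= INR (length V) * B.
Proof.
  induction V as [| a V IH]; intros H; [simpl; lra |].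
  pose proof (H a (or_introl eq_refl)); pose proof (IH (fun v h => H v (or_intror h))).
  unfold sumL in *; cbn [fold_right length]. rewrite S_INR. lra.
Qed.

Lemma tree_avg_sumL m (F : X -> list bool -> R) V :
  tree_avg m (fun b => sumL (fun v => F v b) V) = sumL (fun v => tree_avg m (F v)) V.
Proof. induction V; simpl; [apply tree_avg_const | rewrite tree_avg_plus, IHV; auto]. Qed.

End ListSum.

(* Massart's finite class lemma for trees: the path-dependent choice [sel b] ranges over [V]. *)
Lemma massart_finite_class m c lam (V : list (list bool -> R)) (sel : list bool -> list bool -> R) :
  0 < lam -> (forall b, length b = m -> In (sel b) V) ->
  (forall v, In v V -> forall u, Rabs (v u) <= c) ->
  tree_avg m (fun b => path_sum m (sel b) b) <= ln (INR (length V)) / lam + 2 * lam * c ^ 2 * INR m.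
Proof.
  intros Hl Hsel Hc.
  set (Z := fun b => sumL (fun v => exp (lam * path_sum m v b)) V).
  assert (HV : (0 < length V)%nat)
    by (destruct V; [destruct (Hsel (repeat false m) (repeat_length _ _)) | simpl; lia]).
  assert (Hsel_le : forall b, length b = m -> exp (lam * path_sum m (sel b) b) <= Z b).
  { intros b Hb. apply (sumL_ge_term (fun v => exp (lam * path_sum m v b)));
      [intros; left; apply exp_pos | apply Hsel; auto]. }
  assert (Zpos : forall b, length b = m -> 0 < Z b).
  { intros b Hb. eapply Rlt_le_trans; [apply exp_pos | apply Hsel_le; auto]. }
  assert (H1 : tree_avg m (fun b => path_sum m (sel b) b) <= / lam * tree_avg m (fun b => ln (Z b))).
  { rewrite <- tree_avg_scal. apply tree_avg_le. intros b Hb. apply (Rmult_le_reg_l lam); auto.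
    rewrite <- Rmult_assoc, Rinv_r, Rmult_1_l by lra. apply exp_le_inv.
    rewrite exp_ln by auto. apply Hsel_le; auto. }
  assert (H2 : exp (tree_avg m (fun b => ln (Z b))) <=
               INR (length V) * exp (2 * lam ^ 2 * c ^ 2 * INR m)).
  { eapply Rle_trans; [apply (exp_tree_avg_le m (fun b => ln (Z b))) |].
    rewrite (tree_avg_ext m (fun b => exp (ln (Z b))) Z) by (intros; apply exp_ln; auto).
    unfold Z. rewrite tree_avg_sumL. apply sumL_le. intros.
    apply tree_avg_exp_path_sum_le, Hc; auto. }
  assert (0 < INR (length V)) by (apply lt_0_INR; auto).
  assert (H3 : tree_avg m (fun b => ln (Z b)) <= ln (INR (length V)) + 2 * lam ^ 2 * c ^ 2 * INR m).
  { apply exp_le_inv. rewrite exp_plus, exp_ln by auto. auto. }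
  eapply Rle_trans; [apply H1 |].
  apply Rle_trans with (/ lam * (ln (INR (length V)) + 2 * lam ^ 2 * c ^ 2 * INR m)).
  - apply Rmult_le_compat_l; [left; apply Rinv_0_lt_compat |]; auto.
  - right; field; lra.
Qed.

Definition clip_at (c z : R) : R := Rmax (- c) (Rmin c z).

Lemma Rabs_clip_at_le c z : 0 <= c -> Rabs (clip_at c z) <= c.
Proof. intros; unfold clip_at, Rmax, Rmin; apply Rabs_le; repeat destruct Rle_dec; lra. Qed.

Lemma clip_at_id c z : Rabs z <= c -> clip_at c z = z.
Proof.
  intros H; apply Rabs_le_inv in H.
  unfold clip_at, Rmax, Rmin; repeat destruct Rle_dec; lra.
Qed.

Lemma half_pow_sq_mul_4_pow j : (/ 2) ^ j * (/ 2) ^ j * 4 ^ j = 1.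
Proof. rewrite <- !Rpow_mult_distr, <- pow1 with j; f_equal; lra. Qed.

(* Dudley chaining along a random path: [approx j b] is a [2^-j]-approximation of the
   tree [h b] taken from the finite net [net j]. *)
Section Chaining.

Variables (m L : nat) (Lam : R) (h : list bool -> list bool -> R)
  (net : nat -> list (list bool -> R)) (approx : nat -> list bool -> list bool -> R).

Hypothesis m_pos : (1 <= m)%nat.
Hypothesis Lam_pos : 0 < Lam.
Hypothesis approx_0 : forall b, approx O b = fun _ => 0.
Hypothesis approx_in_net : forall j b, (j <= L)%nat -> length b = m -> In (approx j b) (net j).
Hypothesis approx_close : forall j b, (j <= L)%nat -> length b = m ->
  forall t, (t < m)%nat -> Rabs (approx j b (firstn t b) - h b (firstn t b)) <= (/ 2) ^ j.
Hypothesis net_size : forall j, (j <= L)%nat -> ln (INR (length (net j))) <= 4 ^ S j * Lam.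

Let increment (j : nat) (b : list bool) : list bool -> R :=
  fun u => clip_at (3 * (/ 2) ^ S j) (approx (S j) b u - approx j b u).

Lemma chain_decomposition b : length b = m ->
  path_sum m (h b) b =
    path_sum m (fun u => h b u - approx L b u) b + fsum L (fun j => path_sum m (increment j b) b).
Proof.
  intros Hb.
  assert (Hinc : forall j, (j < L)%nat ->
            path_sum m (increment j b) b = path_sum m (approx (S j) b) b - path_sum m (approx j b) b).
  { intros j Hj. rewrite <- path_sum_minus. unfold path_sum. apply fsum_ext; intros t Ht.
    f_equal. unfold increment. apply clip_at_id.
    pose proof (approx_close (S j) b ltac:(lia) Hb t Ht).
    pose proof (approx_close j b ltac:(lia) Hb t Ht).
    replace (approx (S j) b (firstn t b) - approx j b (firstn t b)) with
      ((approx (S j) b (firstn t b) - h b (firstn t b)) - (approx j b (firstn t b) - h b (firstn t b)))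
      by ring.
    eapply Rle_trans; [apply Rabs_triang |]. rewrite Rabs_Ropp. simpl pow in *. lra. }
  rewrite (fsum_ext L _ _ Hinc), (fsum_telescope L (fun j => path_sum m (approx j b) b)).
  rewrite path_sum_minus, approx_0.
  replace (path_sum m (fun _ => 0) b) with 0
    by (unfold path_sum; rewrite (fsum_ext m _ (fun _ => 0)), fsum_const by (intros; ring); ring).
  ring.
Qed.

Lemma net_nonempty j : (j <= L)%nat -> (0 < length (net j))%nat.
Proof.
  intros Hj. pose proof (approx_in_net j (repeat false m) Hj (repeat_length _ _)) as Hin.
  destruct (net j); [destruct Hin | simpl; lia].
Qed.

(* Massart at scale [j] with temperature [lam = 4^(j+1) sqrt(Lam m) / m]. *)
Lemma tree_avg_increment_le j : (j < L)%nat ->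
  tree_avg m (fun b => path_sum m (increment j b) b) <= 26 * sqrt (Lam * INR m).
Proof.
  intros Hj.
  set (s := sqrt (Lam * INR m)).
  set (c := 3 * (/ 2) ^ S j).
  assert (Hm : 0 < INR m) by (apply lt_0_INR; lia).
  assert (Hs : 0 < s) by (apply sqrt_lt_R0; nra).
  assert (Hs2 : s * s = Lam * INR m) by (apply sqrt_sqrt; nra).
  set (W := map (fun p : (list bool -> R) * (list bool -> R) => fun u => clip_at c (fst p u - snd p u))
                (list_prod (net (S j)) (net j))).
  set (lam := 4 ^ S j * (s / INR m)).
  assert (Hp4 : 0 < 4 ^ S j) by (apply pow_lt; lra).
  assert (Hlam : 0 < lam) by (apply Rmult_lt_0_compat; [| apply Rdiv_lt_0_compat]; lra).
  eapply Rle_trans.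
  { apply (massart_finite_class m c lam W (increment j) Hlam).
    - intros b Hb. unfold W, increment.
      apply (in_map (fun p : (list bool -> R) * (list bool -> R) => fun u => clip_at c (fst p u - snd p u))
               _ (approx (S j) b, approx j b)).
      apply in_prod; apply approx_in_net; auto; lia.
    - intros w Hw u. apply in_map_iff in Hw. destruct Hw as [p [<- _]].
      apply Rabs_clip_at_le. assert (0 < (/ 2) ^ S j) by (apply pow_lt; lra). unfold c; lra. }
  assert (HW : ln (INR (length W)) <= 2 * 4 ^ S (S j) * Lam).
  { unfold W. rewrite length_map, length_prod, mult_INR.
    rewrite ln_mult by (apply lt_0_INR, net_nonempty; lia).
    pose proof (net_size (S j) ltac:(lia)); pose proof (net_size j ltac:(lia)).
    assert (4 ^ S j <= 4 ^ S (S j)) by (apply Rle_pow; [lra | lia]). nra. }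
  apply Rle_trans with (2 * 4 ^ S (S j) * Lam / lam + 2 * lam * c ^ 2 * INR m).
  - apply Rplus_le_compat_r. unfold Rdiv.
    apply Rmult_le_compat_r; [left; apply Rinv_0_lt_compat |]; auto.
  - pose proof (half_pow_sq_mul_4_pow (S j)) as Hh.
    unfold lam, c. replace (4 ^ S (S j)) with (4 * 4 ^ S j) by auto.
    replace (2 * (4 * 4 ^ S j) * Lam / (4 ^ S j * (s / INR m))) with (8 * (s * s) / s)
      by (rewrite Hs2; field; lra).
    replace (2 * (4 ^ S j * (s / INR m)) * (3 * (/ 2) ^ S j) ^ 2 * INR m)
      with (18 * s * ((/ 2) ^ S j * (/ 2) ^ S j * 4 ^ S j)) by (field; lra).
    rewrite Hh. replace (8 * (s * s) / s) with (8 * s) by (field; lra). lra.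
Qed.

Lemma chaining :
  tree_avg m (fun b => path_sum m (h b) b) <= INR m * (/ 2) ^ L + INR L * (26 * sqrt (Lam * INR m)).
Proof.
  rewrite (tree_avg_ext m _ _ chain_decomposition), tree_avg_plus, tree_avg_fsum.
  apply Rplus_le_compat.
  - rewrite <- (tree_avg_const m (INR m * (/ 2) ^ L)). apply tree_avg_le; intros b Hb.
    apply path_sum_le; intros t Ht. rewrite <- Rabs_Ropp.
    replace (- (h b (firstn t b) - approx L b (firstn t b)))
      with (approx L b (firstn t b) - h b (firstn t b)) by ring.
    apply approx_close; auto.
  - rewrite <- fsum_const. apply fsum_le; intros j Hj. apply tree_avg_increment_le; auto.
Qed.

End Chaining.

Section ListsUpto.
Context {X : Type}.

Fixpoint lists_upto (A : list X) (M : nat) : list (list X) :=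
  match M with
  | O => [[]]
  | S M' => [] :: flat_map (fun a => map (cons a) (lists_upto A M')) A
  end.

Lemma in_lists_upto A M l :
  (length l <= M)%nat -> (forall a, In a l -> In a A) -> In l (lists_upto A M).
Proof.
  revert l; induction M; intros l Hl HA; simpl.
  - destruct l; simpl in *; [auto | lia].
  - destruct l as [| a l]; [left; auto | right].
    apply in_flat_map. exists a. split; [apply HA; simpl; auto |].
    apply in_map, IHM; [simpl in Hl; lia | intros; apply HA; simpl; auto].
Qed.

Lemma length_lists_upto A M : (length (lists_upto A M) <= (length A + 1) ^ M)%nat.
Proof.
  assert (Hflat : forall Ls : list (list X),
            length (flat_map (fun a => map (cons a) Ls) A) = (length A * length Ls)%nat).
  { intros Ls. induction A; simpl; auto. rewrite length_app, length_map, IHA; auto. }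
  induction M; simpl; auto. rewrite Hflat.
  assert (0 < (length A + 1) ^ M)%nat by (apply Nat.neq_0_lt_0, Nat.pow_nonzero; lia).
  nia.
Qed.

End ListsUpto.

Fixpoint lookup (t : nat) (I : list (nat * nat)) : option nat :=
  match I with
  | nil => None
  | (s, q) :: I' => if Nat.eqb s t then Some q else lookup t I'
  end.

Lemma lookup_app t I1 I2 :
  lookup t (I1 ++ I2) = match lookup t I1 with Some q => Some q | None => lookup t I2 end.
Proof. induction I1 as [| [s q] I1 IH]; simpl; auto. destruct (Nat.eqb s t); auto. Qed.

Definition sqdist (d : nat) (w w' : vec) : R := fsum d (fun j => (w j - w' j) ^ 2).

Lemma sqdist_update d w w' x th :
  sqdist d (fun j => w j - th * x j) w' =
    sqdist d w w' - 2 * th * (dot d w x - dot d w' x) + th ^ 2 * sqnorm d x.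
Proof. unfold sqdist, dot, sqnorm. induction d; cbn [fsum]; [ring | rewrite IHd; ring]. Qed.

(* Sequential covers of the ReLU class come from an online learner with delta-quantized
   feedback: on an update with label [q * delta] it projects [w.x] onto the slab
   [[q delta - delta, q delta + delta]] (onto [(-oo, q delta + delta]] when the label is
   compatible with a dead ReLU).  Each update with error [> 4 delta] shrinks [|w - w*|^2]
   by [4 delta^2], so a path needs at most [1/(4 delta^2)] updates, and the learner is
   determined by the list of (time, quantized label) pairs of its updates. *)
Definition learner_step (d : nat) (delta : R) (w x : vec) (o : option nat) : vec :=
  match o with
  | None => w
  | Some q =>
      let z := dot d w x in
      let y := INR q * delta in
      let c := Rmin (y + delta) (if Rle_dec (y - delta) 0 then z else Rmax (y - delta) z) in
      fun j => w j - (z - c) * x j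
  end.

Fixpoint learner_weight (d : nat) (delta : R) (xt : list bool -> vec) (D : nat -> option nat)
    (u : list bool) (t : nat) : vec :=
  match t with
  | O => fun _ => 0
  | S s => learner_step d delta (learner_weight d delta xt D u s) (xt (firstn s u)) (D s)
  end.

Definition learner_pred (d : nat) (delta : R) (xt : list bool -> vec) (D : nat -> option nat)
    (u : list bool) : R :=
  match D (length u) with
  | Some q => INR q * delta
  | None => Rmax 0 (dot d (learner_weight d delta xt D u (length u)) (xt u))
  end.

Definition learner_net d delta xt m M G : list (list bool -> R) :=
  map (fun I => learner_pred d delta xt (fun t => lookup t I))
      (lists_upto (list_prod (seq 0 m) (seq 0 G)) M).

Lemma learner_step_progress d delta w wst x q :
  0 < delta -> sqnorm d x <= 1 -> Rabs (INR q * delta - Rmax 0 (dot d wst x)) <= delta ->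
  exists th, sqdist d (learner_step d delta w x (Some q)) wst <= sqdist d w wst - th ^ 2 /\
    (4 * delta < Rabs (Rmax 0 (dot d w x) - Rmax 0 (dot d wst x)) -> 2 * delta <= Rabs th).
Proof.
  intros Hd Hx Hq. simpl.
  set (z := dot d w x). set (zs := dot d wst x). set (y := INR q * delta).
  set (c := Rmin (y + delta) (if Rle_dec (y - delta) 0 then z else Rmax (y - delta) z)).
  exists (z - c). rewrite sqdist_update. fold z zs.
  apply Rabs_le_inv in Hq. fold y zs in Hq.
  pose proof (sqnorm_nonneg d x).
  split.
  - (* the slab contains [zs], so the projection step is at least as large as it is long *)
    assert ((z - c) * (z - zs) >= (z - c) ^ 2)
      by (unfold c, Rmin, Rmax in *; repeat destruct Rle_dec; try nra).
    pose proof (pow2_ge_0 (z - c)). nra.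
  - intros Herr. unfold c, Rmin, Rmax in *. revert Herr Hq. unfold Rabs.
    repeat destruct Rle_dec; repeat destruct Rcase_abs; intros; lra.
Qed.

Definition quantize (delta y : R) : nat := Z.to_nat (up (y / delta)).

Lemma quantize_spec delta y : 0 < delta -> 0 <= y <= 1 ->
  Rabs (INR (quantize delta y) * delta - y) <= delta /\ INR (quantize delta y) <= 1 / delta + 1.
Proof.
  intros Hd Hy. unfold quantize. destruct (archimed (y / delta)) as [H1 H2].
  assert (0 <= y / delta) by (apply Rmult_le_pos; [| left; apply Rinv_0_lt_compat]; lra).
  assert (Hz : (0 < up (y / delta))%Z) by (apply lt_0_IZR; lra).
  rewrite INR_IZR_INZ, Z2Nat.id by lia.
  assert (y / delta <= 1 / delta) by (apply Rmult_le_compat_r; [left; apply Rinv_0_lt_compat |]; lra).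
  split; [| lra]. apply Rabs_le.
  assert (IZR (up (y / delta)) * delta > y).
  { apply Rmult_gt_compat_r with (r := delta) in H1; [| lra].
    unfold Rdiv in H1. rewrite Rmult_assoc, Rinv_l, Rmult_1_r in H1 by lra. lra. }
  assert (IZR (up (y / delta)) * delta <= y + delta).
  { assert (IZR (up (y / delta)) <= y / delta + 1) by lra.
    apply Rmult_le_compat_r with (r := delta) in H4; [| lra].
    replace ((y / delta + 1) * delta) with (y + delta) in H4 by (field; lra). lra. }
  lra.
Qed.

Section Oracle.

Variables (d : nat) (delta gam : R) (x : nat -> vec) (y : nat -> R).

Definition oracle_update (w : vec) (s : nat) : option nat :=
  if Rlt_dec gam (Rabs (Rmax 0 (dot d w (x s)) - y s)) then Some (quantize delta (y s)) else None.

Fixpoint oracle_weight (s : nat) : vec :=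
  match s with
  | O => fun _ => 0
  | S s' => learner_step d delta (oracle_weight s') (x s') (oracle_update (oracle_weight s') s')
  end.

Fixpoint oracle_updates (n : nat) : list (nat * nat) :=
  match n with
  | O => []
  | S n' => oracle_updates n' ++
      match oracle_update (oracle_weight n') n' with Some q => [(n', q)] | None => [] end
  end.

Lemma lookup_oracle_updates t n :
  lookup t (oracle_updates n) = if Nat.ltb t n then oracle_update (oracle_weight t) t else None.
Proof.
  induction n; simpl; auto. rewrite lookup_app, IHn.
  destruct (Nat.ltb_spec t n); destruct (Nat.ltb_spec t (S n)); try lia.
  - destruct (oracle_update (oracle_weight t) t); auto.
    destruct (oracle_update (oracle_weight n) n); simpl; auto.
    destruct (Nat.eqb_spec n t); [lia | auto].
  - assert (t = n) by lia; subst.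
    destruct (oracle_update (oracle_weight n) n); simpl; auto. rewrite Nat.eqb_refl; auto.
  - destruct (oracle_update (oracle_weight n) n); simpl; auto.
    destruct (Nat.eqb_spec n t); [lia | auto].
Qed.

Lemma in_oracle_updates s q n :
  In (s, q) (oracle_updates n) -> (s < n)%nat /\ oracle_update (oracle_weight s) s = Some q.
Proof.
  induction n; simpl; [tauto |]. intros H. apply in_app_or in H. destruct H as [H | H].
  - destruct (IHn H); split; auto; lia.
  - destruct (oracle_update (oracle_weight n) n) eqn:E; simpl in H; [| tauto].
    destruct H as [H | H]; [inversion H; subst; auto | tauto].
Qed.

End Oracle.

Lemma oracle_potential d delta x wst n :
  0 < delta -> sqnorm d wst <= 1 -> (forall s, (s < n)%nat -> sqnorm d (x s) <= 1) ->
  let y := fun s => Rmax 0 (dot d wst (x s)) in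
  sqdist d (oracle_weight d delta (4 * delta) x y n) wst <=
    1 - 4 * delta ^ 2 * INR (length (oracle_updates d delta (4 * delta) x y n)).
Proof.
  intros Hd Hw Hx y. induction n.
  - simpl. unfold sqdist. rewrite (fsum_ext d _ (fun j => wst j ^ 2)) by (intros; ring).
    fold (sqnorm d wst). lra.
  - simpl oracle_updates. rewrite length_app. simpl oracle_weight.
    set (w := oracle_weight d delta (4 * delta) x y n) in *.
    assert (IH := IHn ltac:(intros; apply Hx; lia)).
    assert (Hy : 0 <= y n <= 1).
    { unfold y. pose proof (Rabs_le_inv _ _ (Rabs_dot_le_1 d wst (x n) Hw (Hx n ltac:(lia)))).
      unfold Rmax; destruct Rle_dec; lra. }
    unfold oracle_update. destruct Rlt_dec as [Herr | Hok].
    + destruct (quantize_spec delta (y n) Hd Hy) as [Hq _].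
      destruct (learner_step_progress d delta w wst (x n) _ Hd (Hx n ltac:(lia)) Hq) as [th [H1 H2]].
      assert (2 * delta <= Rabs th) by (apply H2, Herr).
      assert (4 * delta ^ 2 <= th ^ 2) by (rewrite <- (pow2_abs th); nra).
      simpl length. rewrite plus_INR. simpl INR. lra.
    + simpl length. rewrite Nat.add_0_r. auto.
Qed.

Lemma length_oracle_updates_le d delta x wst n M :
  0 < delta -> sqnorm d wst <= 1 -> (forall s, (s < n)%nat -> sqnorm d (x s) <= 1) ->
  1 <= INR M * (4 * delta ^ 2) ->
  (length (oracle_updates d delta (4 * delta) x (fun s => Rmax 0 (dot d wst (x s))) n) <= M)%nat.
Proof.
  intros Hd Hw Hx HM. pose proof (oracle_potential d delta x wst n Hd Hw Hx) as P; cbv zeta in P.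
  assert (0 <= sqdist d (oracle_weight d delta (4 * delta) x (fun s => Rmax 0 (dot d wst (x s))) n) wst)
    by (apply fsum_nonneg; intros; apply pow2_ge_0).
  apply INR_le, (Rmult_le_reg_r (4 * delta ^ 2)); [nra | lra].
Qed.

Lemma learner_net_covers d xt m M G delta wst b :
  0 < delta -> (forall u, (length u < m)%nat -> sqnorm d (xt u) <= 1) -> sqnorm d wst <= 1 ->
  length b = m -> 1 <= INR M * (4 * delta ^ 2) -> 1 / delta + 1 < INR G ->
  exists v, In v (learner_net d delta xt m M G) /\
    forall t, (t < m)%nat ->
      Rabs (v (firstn t b) - Rmax 0 (dot d wst (xt (firstn t b)))) <= 4 * delta.
Proof.
  intros Hd Hxt Hw Hb HM HG.
  set (x := fun s => xt (firstn s b)).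
  set (y := fun s => Rmax 0 (dot d wst (x s))).
  assert (Hx : forall s, (s < m)%nat -> sqnorm d (x s) <= 1)
    by (intros s Hs; apply Hxt; rewrite length_firstn; lia).
  assert (Hy : forall s, (s < m)%nat -> 0 <= y s <= 1).
  { intros s Hs. unfold y. pose proof (Rabs_le_inv _ _ (Rabs_dot_le_1 d wst (x s) Hw (Hx s Hs))).
    unfold Rmax; destruct Rle_dec; lra. }
  set (I := oracle_updates d delta (4 * delta) x y m).
  exists (learner_pred d delta xt (fun t => lookup t I)). split.
  - apply (in_map (fun I => learner_pred d delta xt (fun t => lookup t I))), in_lists_upto.
    + apply length_oracle_updates_le; auto.
    + intros [s q] Hin. apply in_oracle_updates in Hin. destruct Hin as [Hs Hq].
      unfold oracle_update in Hq. destruct Rlt_dec; [| discriminate]. inversion Hq; subst q.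
      apply in_prod; apply in_seq; split; try lia.
      destruct (quantize_spec delta (y s) Hd (Hy s Hs)) as [_ Hr].
      apply INR_lt. simpl; lra.
  - intros t Ht.
    assert (Hweight : forall s, (s <= t)%nat ->
              learner_weight d delta xt (fun t => lookup t I) (firstn t b) s =
              oracle_weight d delta (4 * delta) x y s).
    { induction s; intros Hs; simpl; auto. rewrite IHs by lia.
      rewrite firstn_firstn, Nat.min_l by lia. unfold I. rewrite lookup_oracle_updates.
      destruct (Nat.ltb_spec s m); [auto | lia]. }
    unfold learner_pred. rewrite length_firstn, Nat.min_l by lia.
    unfold I. rewrite lookup_oracle_updates. destruct (Nat.ltb_spec t m); [| lia].
    unfold oracle_update at 1. destruct Rlt_dec as [Herr | Hok].
    + destruct (quantize_spec delta (y t) Hd (Hy t Ht)) as [Hq _]. unfold y, x in Hq |- *. lra.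
    + rewrite Hweight by lia. apply Rnot_lt_le in Hok. auto.
Qed.

(* The net at scale [2^-j] for [+-ReLU]: learner precision [delta = 2^-j/4], at most
   [4^(j+1)] updates, labels quantized to [0 .. 2^(j+2)+1]. *)
Definition signed_relu_net d xt m j : list (list bool -> R) :=
  let C := learner_net d ((/ 2) ^ j / 4) xt m (4 ^ S j) (2 ^ (j + 2) + 2) in
  C ++ map (fun v u => - v u) C.

Definition entropy_scale (m : nat) : R := ln (2 * (INR m * (2 ^ (S (Nat.log2 m) + 2) + 2) + 1)).

Lemma entropy_scale_pos m : (1 <= m)%nat -> 0 < entropy_scale m.
Proof.
  intros Hm. unfold entropy_scale. rewrite <- ln_1. apply ln_increasing; [lra |].
  assert (1 <= INR m) by (apply (le_INR 1); lia).
  assert (0 < 2 ^ (S (Nat.log2 m) + 2)) by (apply pow_lt; lra). nra.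
Qed.

Lemma signed_relu_net_covers d xt m j sg w b :
  (forall u, (length u < m)%nat -> sqnorm d (xt u) <= 1) -> sqnorm d w <= 1 ->
  sg = 1 \/ sg = -1 -> length b = m ->
  exists v, In v (signed_relu_net d xt m j) /\
    forall t, (t < m)%nat ->
      Rabs (v (firstn t b) - sg * Rmax 0 (dot d w (xt (firstn t b)))) <= (/ 2) ^ j.
Proof.
  intros Hxt Hw Hsg Hb.
  assert (Hg : 0 < (/ 2) ^ j) by (apply pow_lt; lra).
  replace ((/ 2) ^ j) with (4 * ((/ 2) ^ j / 4)) by field.
  destruct (learner_net_covers d xt m (4 ^ S j) (2 ^ (j + 2) + 2) ((/ 2) ^ j / 4) w b
              ltac:(lra) Hxt Hw Hb) as [v [Hin Hv]].
  - pose proof (half_pow_sq_mul_4_pow j).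
    rewrite pow_INR. replace (INR 4) with 4 by (simpl; ring).
    replace (4 ^ S j * (4 * ((/ 2) ^ j / 4) ^ 2)) with ((/ 2) ^ j * (/ 2) ^ j * 4 ^ j)
      by (simpl; field). lra.
  - rewrite plus_INR, pow_INR. replace (INR 2) with 2 by (simpl; ring).
    assert (1 / ((/ 2) ^ j / 4) = 2 ^ (j + 2))
      by (rewrite pow_add, pow_inv; field; apply pow_nonzero; lra).
    lra.
  - unfold signed_relu_net; cbv zeta. destruct Hsg as [-> | ->].
    + exists v. split; [apply in_or_app; left; auto |].
      intros t Ht. rewrite Rmult_1_l. apply Hv; auto.
    + exists (fun u => - v u). split; [apply in_or_app; right; apply (in_map (fun v u => - v u)); auto |].
      intros t Ht. rewrite <- Rabs_Ropp.
      replace (- (- v (firstn t b) - -1 * Rmax 0 (dot d w (xt (firstn t b)))))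
        with (v (firstn t b) - Rmax 0 (dot d w (xt (firstn t b)))) by ring.
      apply Hv; auto.
Qed.

Lemma ln_length_signed_relu_net_le d xt m j : (1 <= m)%nat -> (j <= S (Nat.log2 m))%nat ->
  ln (INR (length (signed_relu_net d xt m j))) <= 4 ^ S j * entropy_scale m.
Proof.
  intros Hm Hj. unfold signed_relu_net; cbv zeta. rewrite length_app, length_map.
  set (C := learner_net d ((/ 2) ^ j / 4) xt m (4 ^ S j) (2 ^ (j + 2) + 2)).
  set (A := list_prod (seq 0 m) (seq 0 (2 ^ (j + 2) + 2))).
  assert (HC : (length C <= (length A + 1) ^ (4 ^ S j))%nat)
    by (unfold C, learner_net; rewrite length_map; apply length_lists_upto).
  assert (HA : length A = (m * (2 ^ (j + 2) + 2))%nat)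
    by (unfold A; rewrite length_prod, !length_seq; auto).
  assert (H4 : 1 <= 4 ^ S j) by (apply pow_R1_Rle; lra).
  pose proof (entropy_scale_pos m Hm).
  destruct (Nat.eq_dec (length C) 0) as [E | E].
  { (* [ln 0 = 0] in Stdlib *)
    rewrite E. replace (INR (0 + 0)) with 0 by (simpl; ring).
    unfold ln. destruct Rlt_dec as [h | h]; [destruct (Rlt_irrefl 0 h) |]. nra. }
  rewrite plus_INR. replace (INR (length C) + INR (length C)) with (2 * INR (length C)) by ring.
  assert (0 < INR (length C)) by (apply lt_0_INR; lia).
  rewrite ln_mult by lra.
  assert (Ha : 1 <= INR (length A + 1)) by (rewrite plus_INR; simpl; pose proof (pos_INR (length A)); lra).
  assert (ln (INR (length C)) <= 4 ^ S j * ln (INR (length A + 1))).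
  { eapply Rle_trans; [apply ln_le; [auto | apply le_INR, HC] |].
    rewrite pow_INR, ln_pow by lra. rewrite pow_INR. simpl INR. right. repeat f_equal; ring. }
  pose proof (ln_nonneg _ Ha).
  assert (0 < ln 2) by (rewrite <- ln_1; apply ln_increasing; lra).
  assert (ln (INR (length A + 1)) + ln 2 <= entropy_scale m).
  { unfold entropy_scale. rewrite Rplus_comm, <- ln_mult by lra. apply ln_le; [lra |].
    apply Rmult_le_compat_l; [lra |]. rewrite plus_INR, HA, mult_INR, plus_INR, pow_INR. simpl INR.
    apply Rplus_le_compat_r, Rmult_le_compat_l; [apply pos_INR |].
    replace (1 + 1) with 2 by ring. apply Rplus_le_compat_r, Rle_pow; [lra | lia]. }
  nra.
Qed.

Lemma mul_half_pow_log2_le_1 m : (1 <= m)%nat -> INR m * (/ 2) ^ S (Nat.log2 m) <= 1.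
Proof.
  intros Hm. destruct (Nat.log2_spec m ltac:(lia)) as [_ H2].
  assert (INR m < 2 ^ S (Nat.log2 m)).
  { replace 2 with (INR 2) by (simpl; lra). rewrite <- pow_INR. apply lt_INR. simpl in H2 |- *. lia. }
  assert (0 < (/ 2) ^ S (Nat.log2 m)) by (apply pow_lt; lra).
  assert (2 ^ S (Nat.log2 m) * (/ 2) ^ S (Nat.log2 m) = 1)
    by (rewrite <- Rpow_mult_distr, Rinv_r, pow1; lra).
  nra.
Qed.

(* Sequential Rademacher complexity of the single-neuron class [{+-ReLU(w.x)}]. *)
Lemma tree_avg_signed_relu_le d xt m (sg : list bool -> R) (w : list bool -> vec) :
  (1 <= m)%nat -> (forall u, (length u < m)%nat -> sqnorm d (xt u) <= 1) ->
  (forall b, sg b = 1 \/ sg b = -1) -> (forall b, sqnorm d (w b) <= 1) ->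
  tree_avg m (fun b => path_sum m (fun u => sg b * Rmax 0 (dot d (w b) (xt u))) b)
    <= 1 + INR (S (Nat.log2 m)) * (26 * sqrt (entropy_scale m * INR m)).
Proof.
  intros Hm Hxt Hsg Hw.
  set (L := S (Nat.log2 m)).
  set (h := fun b u => sg b * Rmax 0 (dot d (w b) (xt u))).
  set (net := fun j => match j with O => [fun _ : list bool => 0] | _ => signed_relu_net d xt m j end).
  destruct (choice (fun (p : nat * list bool) v => length (snd p) = m ->
              In v (signed_relu_net d xt m (fst p)) /\
              forall t, (t < m)%nat -> Rabs (v (firstn t (snd p)) - h (snd p) (firstn t (snd p))) <= (/ 2) ^ fst p))
    as [sel Hsel].
  { intros [j b]. destruct (Nat.eq_dec (length b) m) as [Hb | Hb].
    - destruct (signed_relu_net_covers d xt m j (sg b) (w b) b Hxt (Hw b) (Hsg b) Hb) as [v Hv].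
      exists v; auto.
    - exists (fun _ => 0); intros; contradiction. }
  set (approx := fun j b => match j with O => fun _ : list bool => 0 | _ => sel (j, b) end).
  pose proof (mul_half_pow_log2_le_1 m Hm).
  eapply Rle_trans; [apply (chaining m L (entropy_scale m) h net approx Hm (entropy_scale_pos m Hm)) |].
  - intros; reflexivity.
  - intros [| j] b _ Hb; [left; auto | apply (Hsel (S j, b) Hb)].
  - intros [| j] b _ Hb t Ht; [| apply (Hsel (S j, b) Hb); auto].
    simpl. rewrite Rminus_0_l, Rabs_Ropp. unfold h. rewrite Rabs_mult.
    replace (Rabs (sg b)) with 1 by (destruct (Hsg b) as [-> | ->]; unfold Rabs; destruct Rcase_abs; lra).
    rewrite Rmult_1_l. apply Rabs_relu_le_1; auto. apply Hxt. rewrite length_firstn. lia.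
  - intros [| j] Hj.
    + simpl. rewrite ln_1. pose proof (entropy_scale_pos m Hm). lra.
    + apply ln_length_signed_relu_net_le; auto.
  - unfold L; lra.
Qed.

Lemma clip_bounds z : -1 <= clip z <= 1.
Proof. unfold clip, Rmax, Rmin; repeat destruct Rle_dec; lra. Qed.

Lemma clip_ge_inv g s a : 0 < a -> -1 + a <= s -> clip g >= s + a -> g >= s + a.
Proof. unfold clip, Rmax, Rmin; repeat destruct Rle_dec; lra. Qed.

Lemma clip_le_inv g s a : 0 < a -> s <= 1 - a -> clip g <= s - a -> g <= s - a.
Proof. unfold clip, Rmax, Rmin; repeat destruct Rle_dec; lra. Qed.

Lemma firstn_app_length (u w : list bool) : firstn (length u) (u ++ w) = u.
Proof. rewrite firstn_app, Nat.sub_diag, firstn_O, app_nil_r, firstn_all; auto. Qed.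

Lemma nth_app_length (u w : list bool) c : nth (length u) (u ++ c :: w) false = c.
Proof. rewrite app_nth2, Nat.sub_diag by lia; auto. Qed.

Definition net_out (d k : nat) (a : nat -> R) (w : nat -> vec) (x : vec) : R :=
  fsum k (fun j => a j * Rmax 0 (dot d (w j) x)).

Lemma path_sum_net_out_le d k m a w xt b : (forall j, (j < k)%nat -> -1 <= a j <= 1) ->
  path_sum m (fun u => net_out d k a w (xt u)) b <=
    fsum k (fun j => Rabs (path_sum m (fun u => Rmax 0 (dot d (w j) (xt u))) b)).
Proof.
  intros Ha. unfold path_sum at 1, net_out.
  rewrite (fsum_ext m _ (fun t => fsum k (fun j =>
             a j * (bsign (nth t b false) * Rmax 0 (dot d (w j) (xt (firstn t b)))))))
    by (intros; rewrite <- fsum_scal; apply fsum_ext; intros; ring).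
  rewrite fsum_swap. apply fsum_le; intros j Hj. rewrite fsum_scal.
  specialize (Ha j Hj). unfold Rabs; destruct Rcase_abs; fold (path_sum m (fun u => Rmax 0 (dot d (w j) (xt u))) b); nra.
Qed.

Section Shattered.

Variables (d k : nat) (alpha : R) (m : nat) (xt : list bool -> vec) (st : list bool -> R).
Hypothesis alpha_pos : 0 < alpha.
Hypothesis shattered : seq_shattered d (inH k d) alpha m xt st.

Lemma shattered_threshold_bounds u : (length u < m)%nat -> -1 + alpha <= st u <= 1 - alpha.
Proof.
  intros Hu. destruct shattered as [_ Hsh].
  assert (Hbranch : forall c : bool, exists f : vec -> R, inH k d f /\
            if c then f (xt u) >= st u + alpha else f (xt u) <= st u - alpha).
  { intros c. set (b := u ++ c :: repeat false (m - length u - 1)).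
    assert (Hb : length b = m) by (unfold b; rewrite length_app; simpl; rewrite repeat_length; lia).
    destruct (Hsh b Hb) as [f [Hf Hft]]. exists f. split; auto.
    specialize (Hft (length u) Hu). cbv zeta in Hft.
    unfold b in Hft. rewrite nth_app_length, firstn_app_length in Hft. auto. }
  assert (Hrange : forall f, inH k d f -> -1 <= f (xt u) <= 1)
    by (intros f [a [w [_ ->]]]; apply clip_bounds).
  destruct (Hbranch true) as [f1 [Hf1 H1]]; destruct (Hbranch false) as [f0 [Hf0 H0]].
  pose proof (Hrange f1 Hf1); pose proof (Hrange f0 Hf0). lra.
Qed.

(* Along every path the shattering networks can be taken unclipped, since the thresholds
   stay [alpha] away from [+-1]. *)
Lemma shattered_networks : exists (a : list bool -> nat -> R) (w : list bool -> nat -> vec),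
  forall b, (forall j, (j < k)%nat -> -1 <= a b j <= 1 /\ sqnorm d (w b j) <= 1) /\
    (length b = m -> forall t, (t < m)%nat ->
       alpha <= bsign (nth t b false) * (net_out d k (a b) (w b) (xt (firstn t b)) - st (firstn t b))).
Proof.
  destruct (choice (fun (b : list bool) (aw : (nat -> R) * (nat -> vec)) =>
     (forall j, (j < k)%nat -> -1 <= fst aw j <= 1 /\ sqnorm d (snd aw j) <= 1) /\
     (length b = m -> forall t, (t < m)%nat ->
        alpha <= bsign (nth t b false) * (net_out d k (fst aw) (snd aw) (xt (firstn t b)) - st (firstn t b)))))
    as [aw Haw].
  { intros b. destruct (Nat.eq_dec (length b) m) as [Hb | Hb].
    - destruct shattered as [_ Hsh]. destruct (Hsh b Hb) as [f [[a [w [Hn Hf]]] Hft]].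
      exists (a, w); simpl. split.
      + intros j Hj. destruct (Hn j Hj); split; auto. apply sqnorm_le_1; auto.
      + intros _ t Ht. specialize (Hft t Ht). cbv zeta in Hft. rewrite Hf in Hft.
        assert (Hl : (length (firstn t b) < m)%nat) by (rewrite length_firstn; lia).
        destruct (shattered_threshold_bounds _ Hl).
        destruct (nth t b false); simpl.
        * apply clip_ge_inv in Hft; auto. unfold net_out. lra.
        * apply clip_le_inv in Hft; auto. unfold net_out. lra.
    - exists (fun _ => 0, fun _ _ => 0); simpl. split; [| intros; lia].
      intros; split; [lra |]. unfold sqnorm.
      rewrite (fsum_ext d _ (fun _ => 0)), fsum_const by (intros; ring). lra. }
  exists (fun b => fst (aw b)), (fun b => snd (aw b)). exact Haw.
Qed.

Lemma shattered_depth_le : (1 <= m)%nat ->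
  INR m * alpha <= INR k * (1 + INR (S (Nat.log2 m)) * (26 * sqrt (entropy_scale m * INR m))).
Proof.
  intros Hm. destruct shattered_networks as [a [w Haw]].
  assert (Hxt : forall u, (length u < m)%nat -> sqnorm d (xt u) <= 1)
    by (intros u Hu; destruct shattered as [HX _]; apply sqnorm_le_1, (HX u Hu)).
  set (P := fun j b => path_sum m (fun u => Rmax 0 (dot d (w b j) (xt u))) b).
  set (sg := fun j b => if Rle_dec 0 (P j b) then 1 else -1).
  assert (Hlow : INR m * alpha <= tree_avg m (fun b => path_sum m (fun u => net_out d k (a b) (w b) (xt u)) b)).
  { replace (tree_avg m _) with
      (tree_avg m (fun b => path_sum m (fun u => net_out d k (a b) (w b) (xt u) - st u) b) +
       tree_avg m (path_sum m st))
      by (rewrite <- tree_avg_plus; apply tree_avg_ext; intros; rewrite path_sum_minus; ring).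
    rewrite tree_avg_path_sum_0, Rplus_0_r, <- (tree_avg_const m (INR m * alpha)).
    apply tree_avg_le; intros b Hb. unfold path_sum. rewrite <- fsum_const.
    apply fsum_le; intros t Ht. apply (proj2 (Haw b) Hb t Ht). }
  assert (Hup : forall b, length b = m ->
            path_sum m (fun u => net_out d k (a b) (w b) (xt u)) b <=
            fsum k (fun j => path_sum m (fun u => sg j b * Rmax 0 (dot d (w b j) (xt u))) b)).
  { intros b Hb. eapply Rle_trans; [apply path_sum_net_out_le, (proj1 (Haw b)) |].
    apply fsum_le; intros j Hj. unfold path_sum at 2.
    rewrite (fsum_ext m _ (fun t => sg j b * (bsign (nth t b false) * Rmax 0 (dot d (w b j) (xt (firstn t b))))))
      by (intros; ring).
    rewrite fsum_scal. fold (path_sum m (fun u => Rmax 0 (dot d (w b j) (xt u))) b). fold (P j b).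
    unfold sg, Rabs. destruct Rcase_abs, Rle_dec; lra. }
  eapply Rle_trans; [apply Hlow |]. eapply Rle_trans; [apply (tree_avg_le m _ _ Hup) |].
  rewrite tree_avg_fsum, <- (fsum_const k). apply fsum_le; intros j Hj.
  apply tree_avg_signed_relu_le; auto.
  - intros b. unfold sg. destruct Rle_dec; auto.
  - intros b. apply (proj1 (Haw b) j Hj).
Qed.

End Shattered.

Lemma ln_2_bounds : / 2 < ln 2 < 1.
Proof.
  split; [apply ln_lt_2 |]. rewrite <- (ln_exp 1). apply ln_increasing; [lra |].
  pose proof (exp_ineq1 1 ltac:(lra)). lra.
Qed.

Lemma chaining_bound_le m : (1 <= m)%nat ->
  let l := ln (INR m + 1) in
  1 + INR (S (Nat.log2 m)) * (26 * sqrt (entropy_scale m * INR m)) <= 280 * l * sqrt (l * INR m).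
Proof.
  intros Hm l.
  assert (Hm' : 1 <= INR m) by (apply (le_INR 1); lia).
  destruct ln_2_bounds as [Hl2a Hl2b].
  assert (Hl : ln 2 <= l) by (apply ln_le; lra).
  destruct (Nat.log2_spec m ltac:(lia)) as [Hlog _].
  set (p := Nat.log2 m) in *.
  assert (Hp : 2 ^ p <= INR m)
    by (replace 2 with (INR 2) by (simpl; lra); rewrite <- pow_INR; apply le_INR; auto).
  assert (Hp0 : 0 < 2 ^ p) by (apply pow_lt; lra).
  assert (HL : INR (S p) <= 4 * l).
  { rewrite S_INR. assert (INR p * ln 2 <= l) by (rewrite <- (ln_pow 2 ltac:(lra) p); apply ln_le; lra).
    nra. }
  assert (Hent : entropy_scale m <= 7 * l).
  { unfold entropy_scale. fold p. replace (2 ^ (S p + 2)) with (8 * 2 ^ p) by (rewrite pow_add; simpl; ring).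
    apply Rle_trans with (ln (22 * (INR m + 1) ^ 2)); [apply ln_le; nra |].
    rewrite ln_mult, ln_pow by (try apply pow_lt; lra). simpl INR. fold l.
    assert (ln 22 <= 5 * ln 2).
    { replace 5 with (INR 5) by (simpl; ring). rewrite <- (ln_pow 2 ltac:(lra) 5). apply ln_le; simpl; lra. }
    lra. }
  pose proof (entropy_scale_pos m Hm).
  assert (Hs : sqrt (entropy_scale m * INR m) <= 265 / 100 * sqrt (l * INR m)).
  { rewrite <- (sqrt_square (265 / 100)) by lra. rewrite <- sqrt_mult by nra.
    apply sqrt_le_1_alt. nra. }
  assert (Hsq : 0 <= sqrt (l * INR m)) by apply sqrt_pos.
  assert (Hsq2 : sqrt (l * INR m) * sqrt (l * INR m) = l * INR m) by (apply sqrt_sqrt; nra).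
  assert (H1 : 1 <= 3 * l * sqrt (l * INR m)).
  { assert ((l * sqrt (l * INR m)) ^ 2 >= 1 / 8).
    { replace ((l * sqrt (l * INR m)) ^ 2) with (l * l * (sqrt (l * INR m) * sqrt (l * INR m))) by ring.
      rewrite Hsq2. assert (l * l >= 1 / 4) by nra. nra. }
    assert (0 <= l * sqrt (l * INR m)) by nra. nra. }
  assert (INR (S p) * (26 * sqrt (entropy_scale m * INR m)) <= 4 * l * (26 * (265 / 100 * sqrt (l * INR m)))).
  { apply Rmult_le_compat; try apply pos_INR; auto. apply Rmult_le_pos; [lra | apply sqrt_pos]. lra. }
  nra.
Qed.

Lemma shattered_depth_le_ln_cube d k alpha m xt st :
  0 < alpha -> (1 <= m)%nat -> seq_shattered d (inH k d) alpha m xt st ->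
  INR m <= 280 ^ 2 * (INR k / alpha) ^ 2 * ln (INR m + 1) ^ 3.
Proof.
  intros Ha Hm Hsh.
  pose proof (shattered_depth_le d k alpha m xt st Ha Hsh Hm) as H1.
  pose proof (chaining_bound_le m Hm) as H2. cbv zeta in H2.
  set (l := ln (INR m + 1)) in *. set (q := sqrt (l * INR m)) in *.
  assert (Hm' : 1 <= INR m) by (apply (le_INR 1); lia).
  assert (Hk : 0 <= INR k) by apply pos_INR.
  assert (Hl : 0 < l) by (unfold l; rewrite <- ln_1; apply ln_increasing; lra).
  assert (Hq : 0 <= q) by apply sqrt_pos.
  assert (Hq2 : q * q = l * INR m) by (apply sqrt_sqrt; nra).
  assert (H3 : INR m * alpha <= 280 * INR k * l * q) by nra.
  assert (H4 : (INR m * alpha) ^ 2 <= (280 * INR k * l * q) ^ 2) by (apply pow_incr; nra).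
  replace ((280 * INR k * l * q) ^ 2) with (280 ^ 2 * INR k ^ 2 * l ^ 2 * (q * q)) in H4 by ring.
  rewrite Hq2 in H4.
  replace (280 ^ 2 * (INR k / alpha) ^ 2 * l ^ 3) with (280 ^ 2 * INR k ^ 2 * l ^ 3 / alpha ^ 2) by (field; lra).
  apply Rmult_le_reg_r with (alpha ^ 2); [apply pow_lt; lra |].
  unfold Rdiv. rewrite Rmult_assoc, Rinv_l, Rmult_1_r by (apply pow_nonzero; lra).
  apply (Rmult_le_reg_l (INR m)); nra.
Qed.

(* Inverting [m <= B ln(m+1)^3]: write [m + 1 = r^4] and use [ln r <= r]. *)
Lemma le_of_le_mul_ln_cube B m : 0 < B -> 0 <= m -> m <= B * ln (m + 1) ^ 3 ->
  m <= 64 * B * ln (64 * B + 1) ^ 3.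
Proof.
  intros HB Hm H. set (n := m + 1). set (r := sqrt (sqrt n)).
  assert (Hn : 1 <= n) by (unfold n; lra).
  assert (Hsn : 1 <= sqrt n) by (rewrite <- sqrt_1; apply sqrt_le_1_alt; lra).
  assert (Hr : 1 <= r) by (unfold r; rewrite <- sqrt_1; apply sqrt_le_1_alt; lra).
  assert (Hr4 : r ^ 4 = n).
  { unfold r. replace (sqrt (sqrt n) ^ 4) with ((sqrt (sqrt n) * sqrt (sqrt n)) * (sqrt (sqrt n) * sqrt (sqrt n))) by ring.
    rewrite sqrt_sqrt by lra. apply sqrt_sqrt; lra. }
  assert (Hln : ln n = 4 * ln r) by (rewrite <- Hr4, ln_pow by lra; simpl; ring).
  assert (Hlr : 0 <= ln r) by (apply ln_nonneg; lra).
  assert (Hlr2 : ln r <= r) by (pose proof (ln_le_minus_1 r ltac:(lra)); lra).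
  fold n in H. rewrite Hln in H.
  assert (Hr3 : n <= (64 * B + 1) * r ^ 3).
  { assert (ln r ^ 3 <= r ^ 3) by (apply pow_incr; lra).
    assert (1 <= r ^ 3) by (apply pow_R1_Rle; lra).
    unfold n at 1. nra. }
  assert (Hrb : r <= 64 * B + 1).
  { rewrite <- Hr4 in Hr3. assert (0 < r ^ 3) by (apply pow_lt; lra).
    replace (r ^ 4) with (r * r ^ 3) in Hr3 by ring. nra. }
  assert (ln r ^ 3 <= ln (64 * B + 1) ^ 3) by (apply pow_incr; split; [| apply ln_le]; lra).
  nra.
Qed.

Lemma ln_mul_sq_plus_1_le K z : 0 < K -> 1 <= z ->
  ln (K * z ^ 2 + 1) <= (ln (K + 1) + 2) * (1 + ln z).
Proof.
  intros HK Hz.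
  assert (1 <= z ^ 2) by (apply pow_R1_Rle; lra).
  apply Rle_trans with (ln ((K + 1) * z ^ 2)); [apply ln_le; nra |].
  rewrite ln_mult, ln_pow by (try apply pow_lt; lra). simpl INR.
  pose proof (ln_nonneg (K + 1) ltac:(lra)). pose proof (ln_nonneg z Hz). nra.
Qed.

Theorem propositionC4 :
  exists C : R, C > 0 /\
    forall (d k : nat) (alpha : R),
      (1 <= d)%nat -> (1 <= k)%nat -> 0 < alpha <= 1 ->
      fat_le d (inH k d) alpha
        (C * INR k ^ 2 / alpha ^ 2 * (ln (exp 1 * INR k / alpha)) ^ 3).
Proof.
  set (c0 := ln (64 * 280 ^ 2 + 1)).
  assert (Hc0 : 0 <= c0) by (apply ln_nonneg; lra).
  exists (64 * 280 ^ 2 * (c0 + 2) ^ 3). split; [apply Rmult_lt_0_compat; [lra | apply pow_lt; lra] |].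
  intros d k alpha _ Hk [Ha0 Ha1] m xt st Hsh.
  set (z := INR k / alpha).
  assert (Hz : 1 <= z).
  { assert (1 <= INR k) by (apply (le_INR 1); lia).
    unfold z. apply (Rmult_le_reg_r alpha); auto. unfold Rdiv. rewrite Rmult_assoc, Rinv_l; lra. }
  replace (64 * 280 ^ 2 * (c0 + 2) ^ 3 * INR k ^ 2 / alpha ^ 2 * ln (exp 1 * INR k / alpha) ^ 3)
    with (64 * (280 ^ 2 * z ^ 2) * ((c0 + 2) * (1 + ln z)) ^ 3)
    by (replace (exp 1 * INR k / alpha) with (exp 1 * z) by (unfold z; field; lra);
        rewrite ln_mult, ln_exp by (try apply exp_pos; lra); unfold z; field; lra).
  set (B := 280 ^ 2 * z ^ 2).
  assert (HB : 0 < B) by (unfold B; apply Rmult_lt_0_compat; [| apply pow_lt]; lra).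
  pose proof (ln_nonneg z Hz).
  assert (Hln : 0 <= ln (64 * B + 1) <= (c0 + 2) * (1 + ln z)).
  { split; [apply ln_nonneg; lra |].
    unfold B. rewrite <- Rmult_assoc. apply ln_mul_sq_plus_1_le; lra. }
  assert (Hcube : ln (64 * B + 1) ^ 3 <= ((c0 + 2) * (1 + ln z)) ^ 3) by (apply pow_incr; auto).
  destruct m as [| m'].
  - simpl INR. pose proof (pow_le _ 3 (proj1 Hln)). nra.
  - pose proof (shattered_depth_le_ln_cube d k alpha (S m') xt st Ha0 ltac:(lia) Hsh) as Hdepth.
    fold z B in Hdepth.
    pose proof (le_of_le_mul_ln_cube B _ HB (pos_INR _) Hdepth). nra.
Qed.
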